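(* Let $r\in\mathbb R\setminus\{0\}$, let $\varphi_0,\varphi_1,\varphi$ be positive non-degenerate quasi-concave functions on $(0,\infty)$, let $\{\widetilde t_i\}$ be a discretizing sequence for $\varphi(\varphi_0,\varphi_1)$, $\{\tau_k\}$ a discretizing sequence for $\varphi_0$ and $\{z_k\}$ a discretizing sequence for $\varphi_1$. Then there is a constant $C$ independent of $k$ such that for all $k\in\mathbb Z$ $$\sum_{i:\ \tau_k\le\widetilde t_i\le\tau_{k+1}}\varphi\Big(\frac{\varphi_1(\widetilde t_i)}{\varphi_0(\widetilde t_i)}\Big)^r\le C\sup_{i:\ \tau_k\le\widetilde t_i\le\tau_{k+1}}\varphi\Big(\frac{\varphi_1(\widetilde t_i)}{\varphi_0(\widetilde t_i)}\Big)^r,$$ $$\sum_{i:\ z_k\le\widetilde t_i\le z_{k+1}}\Big(\frac{\varphi_0(\widetilde t_i)}{\varphi_1(\widetilde t_i)}\varphi\Big(\frac{\varphi_1(\widetilde t_i)}{\varphi_0(\widetilde t_i)}\Big)\Big)^r\le C\sup_{i:\ z_k\le\widetilde t_i\le z_{k+1}}\Big(\frac{\varphi_0(\widetilde t_i)}{\varphi_1(\widetilde t_i)}\varphi\Big(\frac{\varphi_1(\widetilde t_i)}{\varphi_0(\widetilde t_i)}\Big)\Big)^r.$$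
   Context: A function $\psi:(0,\infty)\to(0,\infty)$ is non-degenerate quasi-concave if it is non-decreasing, $\psi(t)/t$ is non-increasing, and $\lim_{t\to0+}\psi(t)=\lim_{t\to\infty}\psi(t)/t=\lim_{t\to0+}t/\psi(t)=\lim_{t\to\infty}1/\psi(t)=0$. $\varphi(\varphi_0,\varphi_1)(t)=\varphi_0(t)\varphi(\varphi_1(t)/\varphi_0(t))$. A positive sequence is strongly increasing if $\inf_k a_{k+1}/a_k\ge2$, strongly decreasing if $\sup_k a_{k+1}/a_k\le1/2$. A strongly increasing $\{s_k\}_{k\in\mathbb Z}$ is a discretizing sequence for $\psi$ if $\{\psi(s_k)\}$ is strongly increasing, $\{\psi(s_k)/s_k\}$ is strongly decreasing, and $\mathbb Z=\mathbb Z_1\sqcup\mathbb Z_2$ with $\psi(s_{k+1})\le2\psi(s_k)$ for $k\in\mathbb Z_1$ and $\psi(s_k)/s_k\le2\psi(s_{k+1})/s_{k+1}$ for $k\in\mathbb Z_2$. *)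

From Stdlib Require Import Reals Lra ZArith List.
From Coquelicot Require Import Coquelicot.
Open Scope R_scope.

(* Non-degenerate quasi-concave function on (0,oo); only values at t > 0 matter. *)
Definition ndqc (psi : R -> R) : Prop :=
  (forall t, 0 < t -> 0 < psi t) /\
  (forall s t, 0 < s -> s <= t -> psi s <= psi t) /\
  (forall s t, 0 < s -> s <= t -> psi t / t <= psi s / s) /\
  filterlim psi (at_right 0) (locally 0) /\
  filterlim (fun t => psi t / t) (Rbar_locally p_infty) (locally 0) /\
  filterlim (fun t => t / psi t) (at_right 0) (locally 0) /\
  filterlim (fun t => / psi t) (Rbar_locally p_infty) (locally 0).

(* phi(phi0,phi1)(t) = phi0(t) * phi(phi1(t)/phi0(t)) *)
Definition interp_fun (phi phi0 phi1 : R -> R) (t : R) : R :=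
  phi0 t * phi (phi1 t / phi0 t).

Definition pos_seq (a : Z -> R) : Prop := forall k, 0 < a k.

Definition strongly_increasing (a : Z -> R) : Prop :=
  pos_seq a /\ forall k, 2 <= a (k + 1)%Z / a k.

Definition strongly_decreasing (a : Z -> R) : Prop :=
  pos_seq a /\ forall k, a (k + 1)%Z / a k <= 1 / 2.

Definition discretizing (psi : R -> R) (s : Z -> R) : Prop :=
  strongly_increasing s /\
  strongly_increasing (fun k => psi (s k)) /\
  strongly_decreasing (fun k => psi (s k) / s k) /\
  (* Z = Z1 (disjoint union) Z2, with Z1 = {k | P k}, Z2 = {k | ~ P k} *)
  exists P : Z -> Prop,
    (forall k, P k -> psi (s (k + 1)%Z) <= 2 * psi (s k)) /\
    (forall k, ~ P k -> psi (s k) / s k <= 2 * (psi (s (k + 1)%Z) / s (k + 1)%Z)).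

Fixpoint sumR (l : list R) : R :=
  match l with nil => 0 | x :: l' => x + sumR l' end.

(* "sum_{i in A} f i <= C * sup_{i in A} f i" for nonnegative f:
   every finite partial sum over A is bounded by C * M for every
   nonnegative upper bound M of f on A (sup of the empty set taken as 0). *)
Definition sum_le_C_sup (A : Z -> Prop) (f : Z -> R) (C : R) : Prop :=
  forall l : list Z, NoDup l -> (forall i, In i l -> A i) ->
  forall M, 0 <= M -> (forall i, A i -> f i <= M) ->
  sumR (map f l) <= C * M.

(* Write psi = phi(phi0,phi1), so that phi(phi1/phi0) = psi/phi0 and
   (phi0/phi1) phi(phi1/phi0) = psi/phi1; both sums are of the form
   sum (psi(t_i)/phia(t_i))^r over a block s_k <= t_i <= s_(k+1) of a
   discretizing sequence s of phia.  On such a block either phia (k in Z1) or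
   phia(t)/t (k in Z2) varies by at most a factor 2, so psi(t_i)/phia(t_i) is
   within a factor 2 of psi(t_i) or psi(t_i)/t_i divided by a constant.  Both
   are lacunary in i because t discretizes psi.  Raising to the power r keeps
   this (with factor and ratio 2^|r|), and a sum of distinct terms of a
   lacunary sequence is at most a fixed multiple of its largest term. *)

From Stdlib Require Import Reals Lra Lia ZArith List Classical.
From Coquelicot Require Import Coquelicot.
Open Scope R_scope.

Definition comparable (K u v : R) : Prop := u <= K * v /\ v <= K * u.

Definition lacunary (c : R) (x : Z -> R) : Prop :=
  (forall i, 0 < x i) /\
  ((forall i, c * x i <= x (i + 1)%Z) \/ (forall i, c * x (i + 1)%Z <= x i)).

Definition quasi_concave (psi : R -> R) : Prop :=
  (forall t, 0 < t -> 0 < psi t) /\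
  (forall s t, 0 < s -> s <= t -> psi s <= psi t) /\
  (forall s t, 0 < s -> s <= t -> psi t / t <= psi s / s).

Lemma ndqc_quasi_concave (psi : R -> R) : ndqc psi -> quasi_concave psi.
Proof. intros (Hpos & Hmono & Hqc & _). now repeat split. Qed.

Lemma sumR_app (l1 l2 : list R) : sumR (l1 ++ l2) = sumR l1 + sumR l2.
Proof. induction l1 as [|a l1 IH]; simpl; [ring | rewrite IH; ring]. Qed.

Lemma sumR_map_le (f g : Z -> R) (l : list Z) :
  (forall i, In i l -> f i <= g i) -> sumR (map f l) <= sumR (map g l).
Proof.
  induction l as [|a l IH]; simpl; intros Hfg; [lra|].
  assert (f a <= g a) by auto.
  assert (sumR (map f l) <= sumR (map g l)) by auto.
  lra.
Qed.

Lemma sumR_map_scal (g : Z -> R) (c : R) (l : list Z) :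
  sumR (map (fun i => c * g i) l) = c * sumR (map g l).
Proof. induction l as [|a l IH]; simpl; [ring | rewrite IH; ring]. Qed.

Lemma sumR_map_pick_out (x : Z -> R) (l : list Z) (a : Z) :
  0 <= x a -> NoDup l ->
  exists l', NoDup l' /\ (forall i, In i l' -> In i l /\ i <> a) /\
             sumR (map x l) <= x a + sumR (map x l').
Proof.
  intros Hxa Hnd. destruct (in_dec Z.eq_dec a l) as [Hin|Hout].
  - destruct (in_split a l Hin) as (l1 & l2 & ->).
    apply NoDup_remove in Hnd as [Hnd' Hnotin].
    exists (l1 ++ l2). split; [exact Hnd'|split].
    + intros i Hi. split.
      * apply in_app_iff in Hi. apply in_app_iff. simpl. tauto.
      * intros ->. contradiction.
    + rewrite !map_app, !sumR_app. simpl. lra.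
  - exists l. split; [exact Hnd|split].
    + intros i Hi. split; [exact Hi|]. intros ->. contradiction.
    + lra.
Qed.

Lemma list_Z_bounds (l : list Z) :
  l <> nil -> exists L U, In U l /\ forall i, In i l -> (L < i <= U)%Z.
Proof.
  induction l as [|a l IH]; intros Hne; [congruence|].
  destruct l as [|b l].
  - exists (a - 1)%Z, a. split; [now left|]. intros i [<-|[]]. lia.
  - destruct IH as (L & U & HU & Hb); [discriminate|].
    exists (Z.min L (a - 1)), (Z.max U a). split.
    + destruct (Z.max_spec U a) as [[_ ->]|[_ ->]]; [now left | now right].
    + intros i [<-|Hi]; [lia|]. specialize (Hb i Hi). lia.
Qed.

Section IncreasingGeometricSum.

Variables (x : Z -> R) (c : R).
Hypotheses (Hc : 1 < c) (Hpos : forall i, 0 < x i)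
  (Hgrow : forall i, c * x i <= x (i + 1)%Z).

Lemma sumR_increasing_window (n : nat) (N : Z) (l : list Z) :
  NoDup l -> (forall i, In i l -> (N - Z.of_nat n < i <= N)%Z) ->
  sumR (map x l) <= c / (c - 1) * x N.
Proof.
  assert (Hinv : 0 < / (c - 1)) by (apply Rinv_0_lt_compat; lra).
  revert N l. induction n as [|n IH]; intros N l Hnd Hl.
  - destruct l as [|i l]; [|specialize (Hl i (or_introl eq_refl)); lia].
    simpl. assert (0 < x N) by apply Hpos.
    assert (0 < c / (c - 1)) by (apply Rdiv_lt_0_compat; lra).
    nra.
  - assert (HxN : 0 < x N) by apply Hpos.
    destruct (sumR_map_pick_out x l N (Rlt_le _ _ HxN) Hnd)
      as (l' & Hnd' & Hl' & Hsum).
    assert (Hrest : sumR (map x l') <= c / (c - 1) * x (N - 1)%Z).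
    { apply IH; [exact Hnd'|]. intros i Hi. destruct (Hl' i Hi) as [Hi' Hne].
      specialize (Hl i Hi'). lia. }
    assert (Hstep : c * x (N - 1)%Z <= x N).
    { specialize (Hgrow (N - 1)%Z). now replace (N - 1 + 1)%Z with N in Hgrow by lia. }
    replace (c / (c - 1) * x (N - 1)%Z) with (/ (c - 1) * (c * x (N - 1)%Z))
      in Hrest by (field; lra).
    replace (c / (c - 1) * x N) with (x N + / (c - 1) * x N) by (field; lra).
    nra.
Qed.

Lemma sumR_increasing_le_max (l : list Z) :
  NoDup l -> l <> nil -> exists N, In N l /\ sumR (map x l) <= c / (c - 1) * x N.
Proof.
  intros Hnd Hne. destruct (list_Z_bounds l Hne) as (L & U & HU & Hb).
  exists U. split; [exact HU|].
  apply (sumR_increasing_window (Z.to_nat (U - L))); [exact Hnd|].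
  intros i Hi. specialize (Hb i Hi). lia.
Qed.

End IncreasingGeometricSum.

(* The decreasing case reduces to the increasing one through i |-> -i. *)
Lemma sumR_lacunary_le (x : Z -> R) (c : R) (l : list Z) :
  1 < c -> lacunary c x -> NoDup l -> l <> nil ->
  exists N, In N l /\ sumR (map x l) <= c / (c - 1) * x N.
Proof.
  intros Hc [Hpos [Hgrow|Hdecay]] Hnd Hne; [now apply sumR_increasing_le_max|].
  destruct (sumR_increasing_le_max (fun i => x (- i)%Z) c Hc (fun i => Hpos _))
    with (l := map Z.opp l) as (N & HN & Hsum).
  - intros i. specialize (Hdecay (- i - 1)%Z).
    now replace (- i - 1 + 1)%Z with (- i)%Z in Hdecay by lia;
      replace (- (i + 1))%Z with (- i - 1)%Z by lia.
  - apply NoDup_map_NoDup_ForallPairs; [intros a b _ _; lia | exact Hnd].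
  - destruct l; [congruence | discriminate].
  - apply in_map_iff in HN as (j & <- & Hj).
    exists j. split; [exact Hj|].
    rewrite map_map in Hsum.
    rewrite (map_ext (fun i => x (- - i)%Z) x) in Hsum
      by (intros i; now rewrite Z.opp_involutive).
    now rewrite Z.opp_involutive in Hsum.
Qed.

Lemma sum_le_C_sup_comparable_lacunary (A : Z -> Prop) (f x : Z -> R) (K c : R) :
  0 < K -> 1 < c -> lacunary c x -> (forall i, A i -> comparable K (f i) (x i)) ->
  sum_le_C_sup A f (K * K * (c / (c - 1))).
Proof.
  intros HK Hc Hx Hfx l Hnd Hl M HM HfM.
  assert (Hratio : 0 < c / (c - 1)) by (apply Rdiv_lt_0_compat; lra).
  destruct (list_eq_dec Z.eq_dec l nil) as [->|Hne].
  { simpl. apply Rmult_le_pos; [|exact HM].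
    left. apply Rmult_lt_0_compat; [apply Rmult_lt_0_compat|]; assumption. }
  destruct (sumR_lacunary_le x c l Hc Hx Hnd Hne) as (N & HN & Hsum).
  assert (Hf : sumR (map f l) <= K * sumR (map x l)).
  { rewrite <- sumR_map_scal. apply sumR_map_le. intros i Hi. apply (Hfx i (Hl i Hi)). }
  destruct (Hfx N (Hl N HN)) as [_ HxN].
  assert (HfN : f N <= M) by (apply HfM, Hl, HN).
  apply Rle_trans with (K * (c / (c - 1) * x N)).
  { apply Rle_trans with (K * sumR (map x l)); [exact Hf|].
    apply Rmult_le_compat_l; lra. }
  replace (K * K * (c / (c - 1)) * M) with (K * (c / (c - 1) * (K * M))) by ring.
  apply Rmult_le_compat_l; [lra|]. apply Rmult_le_compat_l; [lra|]. nra.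
Qed.

Lemma Rpower_pos (x y : R) : 0 < Rpower x y.
Proof. apply exp_pos. Qed.

Lemma Rle_ln_iff (u v : R) : 0 < u -> 0 < v -> (u <= v <-> ln u <= ln v).
Proof.
  intros Hu Hv. split; [now apply ln_le|].
  intros [Hlt|Heq]; [left; now apply ln_lt_inv | right; now apply ln_inv].
Qed.

Lemma Rpower_comparable (K r u v : R) :
  0 < K -> 0 < u -> 0 < v -> comparable K u v ->
  comparable (Rpower K (Rabs r)) (Rpower u r) (Rpower v r).
Proof.
  intros HK Hu Hv [Huv Hvu].
  apply ln_le in Huv; [|exact Hu]. apply ln_le in Hvu; [|exact Hv].
  rewrite ln_mult in Huv, Hvu by assumption.
  assert (Hr : r * (ln u - ln v) <= Rabs r * ln K /\ r * (ln v - ln u) <= Rabs r * ln K)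
    by (destruct (Rle_or_lt 0 r); [rewrite Rabs_right by lra | rewrite Rabs_left by lra]; split; nra).
  split; rewrite Rle_ln_iff, ln_mult, !ln_Rpower by auto using Rpower_pos, Rmult_lt_0_compat;
    lra.
Qed.

Lemma Rpower_ratio (c r u v : R) :
  0 < c -> 0 < u -> 0 < v -> c * u <= v ->
  (0 < r -> Rpower c (Rabs r) * Rpower u r <= Rpower v r) /\
  (r < 0 -> Rpower c (Rabs r) * Rpower v r <= Rpower u r).
Proof.
  intros Hc Hu Hv Huv.
  apply ln_le in Huv; [|now apply Rmult_lt_0_compat]. rewrite ln_mult in Huv by assumption.
  split; intros Hr;
    rewrite Rle_ln_iff, !ln_mult, !ln_Rpower by auto using Rpower_pos, Rmult_lt_0_compat;
    [rewrite Rabs_right | rewrite Rabs_left]; nra.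
Qed.

Lemma Rpower_lacunary (c r : R) (x : Z -> R) :
  0 < c -> r <> 0 -> lacunary c x ->
  lacunary (Rpower c (Rabs r)) (fun i => Rpower (x i) r).
Proof.
  intros Hc Hr [Hpos Hdir]. split; [intros; apply Rpower_pos|].
  destruct (Rdichotomy _ _ Hr) as [Hneg|Hposr];
    destruct Hdir as [Hup|Hdown]; [right|left|left|right]; intros i.
  - now apply (Rpower_ratio c r (x i) (x (i + 1)%Z)).
  - now apply (Rpower_ratio c r (x (i + 1)%Z) (x i)).
  - now apply (Rpower_ratio c r (x i) (x (i + 1)%Z)).
  - now apply (Rpower_ratio c r (x (i + 1)%Z) (x i)).
Qed.

Lemma Rpower_gt_1 (c r : R) : 1 < c -> r <> 0 -> 1 < Rpower c (Rabs r).
Proof.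
  intros Hc Hr. rewrite <- (Rpower_O c) at 1 by lra.
  apply Rpower_lt; [exact Hc | now apply Rabs_pos_lt].
Qed.

Lemma comparable_pos (K u v : R) : 0 < K -> 0 < v -> comparable K u v -> 0 < u.
Proof. intros HK Hv [_ Hvu]. nra. Qed.

Lemma Rdiv_le_mult (K a p q : R) :
  0 < a -> 0 < p -> 0 < q -> q <= K * p -> a / p <= K * (a / q).
Proof.
  intros Ha Hp Hq Hqp. apply Rmult_le_reg_r with (p * q); [nra|].
  replace (a / p * (p * q)) with (a * q) by (field; lra).
  replace (K * (a / q) * (p * q)) with (a * (K * p)) by (field; lra).
  apply Rmult_le_compat_l; lra.
Qed.

Lemma comparable_div (K a p q : R) :
  0 < K -> 0 < a -> 0 < q -> comparable K p q -> comparable K (a / p) (a / q).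
Proof.
  intros HK Ha Hq Hpq. assert (Hp := comparable_pos K p q HK Hq Hpq).
  destruct Hpq as [Hpq Hqp]. split; now apply Rdiv_le_mult.
Qed.

Lemma lacunary_div_const (c B : R) (x : Z -> R) :
  0 < B -> lacunary c x -> lacunary c (fun i => x i / B).
Proof.
  intros HB [Hpos Hdir]. split; [intros i; now apply Rdiv_lt_0_compat|].
  assert (HB' : 0 <= / B) by (left; now apply Rinv_0_lt_compat).
  destruct Hdir as [H|H]; [left|right]; intros i; unfold Rdiv;
    rewrite <- Rmult_assoc; now apply Rmult_le_compat_r.
Qed.

Lemma strongly_increasing_lacunary (a : Z -> R) :
  strongly_increasing a -> lacunary 2 a.
Proof.
  intros [Hpos Hratio]. split; [exact Hpos|]. left. intros k.
  specialize (Hratio k). specialize (Hpos k).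
  replace (a (k + 1)%Z) with (a (k + 1)%Z / a k * a k) by (field; lra).
  apply Rmult_le_compat_r; lra.
Qed.

Lemma strongly_decreasing_lacunary (a : Z -> R) :
  strongly_decreasing a -> lacunary 2 a.
Proof.
  intros [Hpos Hratio]. split; [exact Hpos|]. right. intros k.
  specialize (Hratio k). specialize (Hpos k).
  replace (2 * a (k + 1)%Z) with (2 * (a (k + 1)%Z / a k) * a k) by (field; lra).
  nra.
Qed.

Definition power_block_constant (r : R) : R :=
  let c := Rpower 2 (Rabs r) in c * c * (c / (c - 1)).

Lemma sum_le_C_sup_Rpower (A : Z -> Prop) (y x : Z -> R) (r : R) :
  r <> 0 -> lacunary 2 x -> (forall i, A i -> comparable 2 (y i) (x i)) ->
  sum_le_C_sup A (fun i => Rpower (y i) r) (power_block_constant r).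
Proof.
  intros Hr Hx Hyx.
  apply sum_le_C_sup_comparable_lacunary with (x := fun i => Rpower (x i) r).
  - apply Rpower_pos.
  - apply Rpower_gt_1; [lra | exact Hr].
  - apply Rpower_lacunary; [lra | exact Hr | exact Hx].
  - intros i Hi. assert (Hxi : 0 < x i) by apply (proj1 Hx).
    apply Rpower_comparable; [lra | | exact Hxi | now apply Hyx].
    apply (comparable_pos 2 _ (x i)); [lra | exact Hxi | now apply Hyx].
Qed.

Lemma discretizing_block_comparable (phia psi : R -> R) (s t : Z -> R) (k : Z) :
  quasi_concave phia -> discretizing phia s -> pos_seq t ->
  lacunary 2 (fun i => psi (t i)) -> lacunary 2 (fun i => psi (t i) / t i) ->
  exists x, lacunary 2 x /\
    forall i, s k <= t i <= s (k + 1)%Z -> comparable 2 (psi (t i) / phia (t i)) (x i).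
Proof.
  intros (Hpos & Hmono & Hqc) [[Hs _] [_ [_ (P & HZ1 & HZ2)]]] Ht Hpsi Hpsit.
  assert (Hsk := Hs k). assert (Hsk1 := Hs (k + 1)%Z).
  destruct (classic (P k)) as [HP|HP].
  - specialize (HZ1 k HP).
    exists (fun i => psi (t i) / phia (s k)). split.
    + apply lacunary_div_const; [now apply Hpos | exact Hpsi].
    + intros i [Hlo Hhi]. assert (Hti := Ht i).
      apply comparable_div; [lra | apply (proj1 Hpsi) | now apply Hpos |].
      assert (phia (t i) <= phia (s (k + 1)%Z)) by now apply Hmono.
      assert (phia (s k) <= phia (t i)) by now apply Hmono.
      assert (0 < phia (t i)) by now apply Hpos.
      split; lra.
  - specialize (HZ2 k HP).
    assert (HB : 0 < phia (s (k + 1)%Z) / s (k + 1)%Z)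
      by (apply Rdiv_lt_0_compat; [now apply Hpos | exact Hsk1]).
    exists (fun i => psi (t i) / t i / (phia (s (k + 1)%Z) / s (k + 1)%Z)). split.
    + now apply lacunary_div_const.
    + intros i [Hlo Hhi]. assert (Hti := Ht i). assert (Hphi := Hpos _ Hti).
      replace (psi (t i) / phia (t i)) with (psi (t i) / t i / (phia (t i) / t i))
        by (field; lra).
      apply comparable_div; [lra | apply (proj1 Hpsit) | exact HB |].
      assert (phia (t i) / t i <= phia (s k) / s k) by now apply Hqc.
      assert (phia (s (k + 1)%Z) / s (k + 1)%Z <= phia (t i) / t i) by now apply Hqc.
      assert (0 < phia (t i) / t i) by now apply Rdiv_lt_0_compat.
      split; lra.
Qed.

Lemma sum_le_C_sup_block (r : R) (phia psi : R -> R) (s t : Z -> R) (k : Z) :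
  r <> 0 -> quasi_concave phia -> discretizing phia s -> pos_seq t ->
  lacunary 2 (fun i => psi (t i)) -> lacunary 2 (fun i => psi (t i) / t i) ->
  sum_le_C_sup (fun i => s k <= t i <= s (k + 1)%Z)
    (fun i => Rpower (psi (t i) / phia (t i)) r) (power_block_constant r).
Proof.
  intros Hr Hphia Hs Ht Hpsi Hpsit.
  destruct (discretizing_block_comparable phia psi s t k Hphia Hs Ht Hpsi Hpsit)
    as (x & Hx & Hcmp).
  now apply sum_le_C_sup_Rpower with x.
Qed.

Lemma sum_le_C_sup_ext (A : Z -> Prop) (f g : Z -> R) (C : R) :
  (forall i, A i -> f i = g i) -> sum_le_C_sup A g C -> sum_le_C_sup A f C.
Proof.
  intros Hfg Hg l Hnd Hl M HM HfM.
  rewrite (map_ext_in f g) by (intros i Hi; now apply Hfg, Hl).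
  apply Hg; [exact Hnd | exact Hl | exact HM |].
  intros i Hi. rewrite <- Hfg by exact Hi. now apply HfM.
Qed.

Theorem lemma3p8 (r : R) (phi0 phi1 phi : R -> R) (tt tau z : Z -> R) :
  r <> 0 ->
  ndqc phi0 -> ndqc phi1 -> ndqc phi ->
  discretizing (interp_fun phi phi0 phi1) tt ->
  discretizing phi0 tau ->
  discretizing phi1 z ->
  exists C : R, forall k : Z,
    sum_le_C_sup (fun i => tau k <= tt i <= tau (k + 1)%Z)
      (fun i => Rpower (phi (phi1 (tt i) / phi0 (tt i))) r) C /\
    sum_le_C_sup (fun i => z k <= tt i <= z (k + 1)%Z)
      (fun i => Rpower (phi0 (tt i) / phi1 (tt i) * phi (phi1 (tt i) / phi0 (tt i))) r) C.
Proof.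
  intros Hr H0 H1 _ [[Htt _] [Hpsi [Hpsit _]]] Htau Hz.
  apply strongly_increasing_lacunary in Hpsi.
  apply strongly_decreasing_lacunary in Hpsit.
  assert (Hpos0 : forall i, 0 < phi0 (tt i)) by (intros i; apply H0, Htt).
  assert (Hpos1 : forall i, 0 < phi1 (tt i)) by (intros i; apply H1, Htt).
  exists (power_block_constant r). intros k. split.
  - eapply sum_le_C_sup_ext;
      [| apply (sum_le_C_sup_block r phi0 (interp_fun phi phi0 phi1) tau tt k); auto using ndqc_quasi_concave].
    intros i _. unfold interp_fun. f_equal. specialize (Hpos0 i). field. lra.
  - eapply sum_le_C_sup_ext;
      [| apply (sum_le_C_sup_block r phi1 (interp_fun phi phi0 phi1) z tt k); auto using ndqc_quasi_concave].
    intros i _. unfold interp_fun. f_equal.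
    specialize (Hpos0 i). specialize (Hpos1 i). field. lra.
Qed.
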